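(* Under the Lyapunov condition with exponent $\delta>0$, set $s=2+\delta$ and for $n\in\mathbb{N}$, $j\in\{0,\ldots,n-1\}$ define \[ \widetilde{\xi}^{(n)}_j=\xi_j\mathbf{1}\{|\xi_j|\le n^{1/s}\}-\mathbb{E}\big[\xi_j\mathbf{1}\{|\xi_j|\le n^{1/s}\}\big],\qquad \widetilde{\lambda}^{(n)}_k=\sum_{j=0}^{n-1}\widetilde{\xi}^{(n)}_j\omega_n^{kj}\quad (1\le k\le n-1). \] Then \[ \mathbb{P}\Big(\lim_{n\to\infty}\max_{1\le k\le n-1}\big||\lambda^{(n)}_k|-|\widetilde{\lambda}^{(n)}_k|\big|=0\Big)=1. \]
   Context: Lyapunov condition: $(\xi_j)_{j\in\mathbb{N}_0}$ is a sequence of i.i.d. non-degenerate real random variables on a probability space $(\Omega,\mathcal{F},\mathbb{P})$ with $\mathbb{E}[\xi_0]=0$, $\mathbb{E}[\xi_0^2]=1$, and there is $\delta>0$ with $\mathbb{E}[|\xi_0|^{2+\delta}]<\infty$. With $\omega_n=\exp(2\pi\mathsf{i}/n)$, $\lambda^{(n)}_k=\sum_{j=0}^{n-1}\xi_j\omega_n^{kj}$. *)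

From HB Require Import structures.
From mathcomp Require Import all_boot all_order all_algebra.
From mathcomp Require Import all_classical all_reals all_analysis.
Set Implicit Arguments. Unset Strict Implicit. Unset Printing Implicit Defensive.
Import Order.TTheory GRing.Theory Num.Theory.
Import numFieldNormedType.Exports.
Local Open Scope classical_set_scope.
Local Open Scope ring_scope.

Definition mutually_independent {d} {T : measurableType d} {R : realType}
  (P : probability T R) (X : nat -> T -> R) : Prop :=
  forall (J : seq nat) (B : nat -> set R), uniq J ->
    (forall j, j \in J -> measurable (B j)) ->
    P (\big[setI/setT]_(j <- J) (X j @^-1` B j)) =
    (\prod_(j <- J) P (X j @^-1` B j))%E.

Definition identically_distributed {d} {T : measurableType d} {R : realType}
  (P : probability T R) (X : nat -> T -> R) : Prop :=
  forall (j : nat) (B : set R), measurable B ->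
    P (X j @^-1` B) = P (X 0%N @^-1` B).

Definition non_degenerate {d} {T : measurableType d} {R : realType}
  (P : probability T R) (Y : T -> R) : Prop :=
  ~ exists c : R, P [set w | Y w = c] = 1%E.

(* Modulus of the complex number sum_{j<n} x_j * omega_n^{k j}, where
   omega_n = exp(2 pi i / n), written via real and imaginary parts:
   omega_n^{kj} = cos(2 pi k j / n) + i sin(2 pi k j / n). *)
Definition dft_abs {R : realType} (n k : nat) (x : nat -> R) : R :=
  Num.sqrt ((\sum_(j < n) x j * cos (2 * pi * (k * j)%:R / n%:R)) ^+ 2 +
            (\sum_(j < n) x j * sin (2 * pi * (k * j)%:R / n%:R)) ^+ 2).

Definition trunc_var {d} {T : measurableType d} {R : realType}
  (Y : T -> R) (n : nat) (s : R) : T -> R :=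
  fun w => if `|Y w| <= (n%:R) `^ (s^-1) then Y w else 0.

Definition xi_tilde {d} {T : measurableType d} {R : realType}
  (P : probability T R) (X : nat -> T -> R) (s : R) (n j : nat) : T -> R :=
  fun w => trunc_var (X j) n s w - fine ('E_P[trunc_var (X j) n s])%E.

(* max_{1 <= k <= n-1} | |lambda^{(n)}_k| - |lambda~^{(n)}_k| |  (0 if n <= 1) *)
Definition max_dev {d} {T : measurableType d} {R : realType}
  (P : probability T R) (X : nat -> T -> R) (s : R) (n : nat) (w : T) : R :=
  \big[Num.max/0]_(1 <= k < n)
     `| dft_abs n k (fun j => X j w) - dft_abs n k (fun j => xi_tilde P X s n j w) |.

From HB Require Import structures.
From mathcomp Require Import all_boot all_order all_algebra.
From mathcomp Require Import all_classical all_reals all_analysis.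
From mathcomp Require Import ring lra measurable_realfun.
Import Order.TTheory GRing.Theory Num.Theory.
Import numFieldNormedType.Exports.
Local Open Scope classical_set_scope.
Local Open Scope ring_scope.

(* Write s = 2 + delta.  Since E|X_0|^s < oo and the X_j are
   identically distributed, sum_j P(|X_j|^s > j + 1) <= E|X_0|^s < oo, so by
   the first Borel-Cantelli lemma almost every sample w satisfies
   |X_j w|^s <= j + 1 for all j beyond some m.  For such a w and every large
   n, all of X_0 w, ..., X_{n-1} w lie in the truncation window
   [-n^(1/s), n^(1/s)], so xi~^(n)_j w = X_j w - c_n, where the centring
   constant c_n does not depend on j (again by identical distribution).
   Finally, for 1 <= k <= n-1 the n-th roots of unity omega_n^(kj) sum to
   zero, so shifting the input of the DFT by a constant does not change
   lambda^(n)_k: the deviation max_dev vanishes for all large n. *)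

(* Multiplying by
   2 sin b with b = pi k / n turns each sum into a telescoping sum. *)
Lemma sum_roots_of_unity (R : realType) (n k : nat) : (0 < k)%N -> (k < n)%N ->
  \sum_(j < n) cos (2 * pi * (k * j)%:R / n%:R) = 0 :> R /\
  \sum_(j < n) sin (2 * pi * (k * j)%:R / n%:R) = 0 :> R.
Proof.
move=> k_gt0 lt_kn.
have n_gt0 : (0 : R) < n%:R by rewrite ltr0n (leq_trans k_gt0 (ltnW lt_kn)).
set b : R := pi * k%:R / n%:R.
set x : nat -> R := fun j => 2 * pi * (k * j)%:R / n%:R.
have x_step j : x j.+1 - b = x j + b by rewrite /x /b mulnS natrD; field; lra.
have x_end : x n - b = - b + (pi *+ 2) *+ k.
  by rewrite /x natrM -mulrnA mulr_natr; field; lra.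
have x0 : x 0%N = 0 by rewrite /x muln0 mulr0 mul0r.
have sin_b_gt0 : 0 < sin b.
  apply: sin_gt0_pi; apply/andP; split.
    by rewrite /b divr_gt0 // mulr_gt0 // ?pi_gt0 // ltr0n.
  by rewrite /b -mulrA gtr_pMr ?pi_gt0 // ltr_pdivrMr // mul1r ltr_nat.
have c_neq0 : sin b * 2 != 0 by rewrite mulf_eq0 negb_or gt_eqF // pnatr_eq0.
split; apply: (mulfI c_neq0); rewrite mulr0 mulr_sumr.
- rewrite (eq_bigr (fun j : 'I_n => sin (x j.+1 - b) - sin (x j - b))); last first.
    by move=> j _; rewrite x_step sinD sinB; ring.
  rewrite -(big_mkord xpredT (fun j => sin (x j.+1 - b) - sin (x j - b))).
  rewrite (telescope_sumr (fun j => sin (x j - b))) //.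
  by rewrite x_end periodicn ?x0 ?add0r ?subrr //; exact: sinD2pi.
- rewrite (eq_bigr (fun j : 'I_n => - cos (x j.+1 - b) - - cos (x j - b))); last first.
    by move=> j _; rewrite x_step cosD cosB; ring.
  rewrite -(big_mkord xpredT (fun j => - cos (x j.+1 - b) - - cos (x j - b))).
  rewrite (telescope_sumr (fun j => - cos (x j - b))) //.
  by rewrite x_end periodicn ?x0 ?add0r ?subrr //; exact: cosD2pi.
Qed.

Lemma dft_abs_shift {R : realType} {n k : nat} {x y : nat -> R} {c : R} :
  (0 < k)%N -> (k < n)%N -> (forall j, (j < n)%N -> y j = x j - c) ->
  dft_abs n k y = dft_abs n k x.
Proof.
move=> k_gt0 lt_kn yE; have [sum_cos sum_sin] := @sum_roots_of_unity R n k k_gt0 lt_kn.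
have shift (f : nat -> R) : \sum_(j < n) f j = 0 ->
    \sum_(j < n) y j * f j = \sum_(j < n) x j * f j.
  move=> sum_f; under eq_bigr => j _ do rewrite yE // mulrBl.
  by rewrite sumrB -mulr_sumr sum_f mulr0 subr0.
rewrite /dft_abs (shift (fun j => cos (2 * pi * (k * j)%:R / n%:R))) //.
by rewrite (shift (fun j => sin (2 * pi * (k * j)%:R / n%:R))).
Qed.

(* If x belongs to A_j only when j + 1 < a, then x lies in at most a of the
   sets A_0, ..., A_(N-1).  This bounds the exceedance count by the moment. *)
Lemma sum_indic_le (R : realType) (U : Type) (A : nat -> set U) (x : U)
    (a : R) (N : nat) :
  0 <= a -> (forall j, A j x -> j.+1%:R < a) ->
  \sum_(j < N) \1_(A j) x <= a.
Proof.
move=> a_ge0 A_lt.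
suff : \sum_(j < N) \1_(A j) x <= a /\ \sum_(j < N) \1_(A j) x <= N%:R :> R.
  by case.
elim: N => [|N [le_a le_N]]; first by rewrite big_ord0.
rewrite big_ord_recr /= indicE.
have [AN|AN] := pselect (A N x).
- rewrite mem_set // -natr1; split; last by rewrite lerD2r.
  by apply: le_trans (ltW (A_lt _ AN)); rewrite -natr1 lerD2r.
- by rewrite memNset // addr0; split => //; rewrite (le_trans le_N) ?ler_nat.
Qed.

Lemma borel_cantelli_ae d (T : measurableType d) (R : realType)
    (P : probability T R) (E : nat -> set T) :
  (forall j, measurable (E j)) -> (\sum_(j <oo) P (E j) < +oo)%E ->
  {ae P, forall w, exists m, forall j, (m <= j)%N -> ~ E j w}.
Proof.
move=> mE sumE; exists (lim_sup_set E); split.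
- by apply: bigcap_measurable => // k _; apply: bigcup_measurable => j _.
- exact: lim_sup_set_cvg0.
- move=> w /= not_ev; apply: contrapT => w_notin; apply: not_ev.
  apply: contrapT => infinitely_often; apply: w_notin => m _.
  apply: contrapT => none_after; apply: infinitely_often; exists m.
  by move=> j le_mj Ejw; apply: none_after; exists j.
Qed.

Lemma measurable_pow_exceedance {R : realType} (s a : R) :
  measurable [set x : R | a < `|x| `^ s].
Proof.
have mh := measurableT_comp (measurable_powR s) (@normr_measurable R setT).
have := mh measurableT _ (measurable_itv `]a, +oo[); rewrite setTI.
by congr measurable; apply/seteqP; split => x /=; rewrite in_itv /= andbT.
Qed.

Section IdenticallyDistributed.
Context {d : measure_display} {T : measurableType d} {R : realType}.
Context {P : probability T R} {X : nat -> T -> R}.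
Hypothesis mX : forall j, measurable_fun setT (X j).
Hypothesis iid : identically_distributed P X.

(* The expectation of a bounded measurable function of X_j only depends on
   the law of X_j, hence equals the one computed for X_0. *)
Lemma expectation_comp_ident (g : R -> R) (M : R) (j : nat) :
  measurable_fun setT g -> (forall x, `|g x| <= M) ->
  ('E_P[g \o X j] = 'E_P[g \o X 0%N])%E.
Proof.
move=> mg g_le.
have pushforwardE k :
    ('E_P[g \o X k] = \int[pushforward P (X k)]_(y in setT) (g y)%:E)%E.
  rewrite expectation.unlock (integral_pushforward (mX k)) ?preimage_setT //.
    exact/measurable_EFinP.
  apply: (le_integrable measurableT _ _ (finite_measure_integrable_cst P M measurableT)).
    by apply/measurable_EFinP; exact: measurableT_comp mg (mX k).
  by move=> x _ /=; rewrite lee_fin (le_trans (g_le _)) // ler_norm.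
by rewrite !pushforwardE; apply: eq_measure_integral => A mA _; exact: iid.
Qed.

Lemma expectation_trunc_var_ident (n : nat) (s : R) (j : nat) :
  ('E_P[trunc_var (X j) n s] = 'E_P[trunc_var (X 0%N) n s])%E.
Proof.
set c := n%:R `^ s^-1.
set g : R -> R := fun x => x * \1_[set y | `|y| <= c] x.
have trunc_varE k : trunc_var (X k) n s = g \o X k.
  apply/funext => w; rewrite /trunc_var /g /= indicE.
  case: ifPn => [inw|outw]; first by rewrite mem_set ?mulr1.
  by rewrite memNset ?mulr0 // => /= inw; rewrite inw in outw.
have m_window : measurable [set y : R | `|y| <= c].
  have := normr_measurable measurableT (measurable_itv `]-oo, c]).
  by rewrite setTI; congr measurable; apply/seteqP; split=> x /=; rewrite in_itv.
rewrite !trunc_varE (@expectation_comp_ident _ `|c|) //.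
- by apply: measurable_funM => //; exact: measurable_indic.
- move=> x; rewrite /g indicE.
  have [inw|outw] := pselect (`|x| <= c).
    by rewrite mem_set // mulr1 (le_trans inw) // ler_norm.
  by rewrite memNset // mulr0 normr0.
Qed.

(* The events {|X_j|^s > j + 1} have summable probabilities when E|X_0|^s is
   finite: each equals P(|X_0|^s > j + 1), and for every N the indicator sum
   over j < N is pointwise bounded by |X_0|^s. *)
Lemma moment_exceedances_summable {s : R} :
  ('E_P[(fun w => `|X 0%N w| `^ s)%R] < +oo)%E ->
  (\sum_(j <oo) P (X j @^-1` [set x | (j.+1%:R < `|x| `^ s)%R]) < +oo)%E.
Proof.
move=> moment_fin.
set h : R -> R := fun x => `|x| `^ s.
have mh : measurable_fun setT h.
  exact: measurableT_comp (measurable_powR s) (@normr_measurable R setT).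
set B : nat -> set R := fun j => [set x | j.+1%:R < h x].
have mB j : measurable (B j) by exact: measurable_pow_exceedance.
have mX0B j : measurable (X 0%N @^-1` B j).
  by have := mX 0%N measurableT _ (mB j); rewrite setTI.
have m_indic (N : nat) (j : 'I_N) :
    measurable_fun setT (fun x => (\1_(X 0%N @^-1` B j) x : R)%:E).
  by apply/measurable_EFinP; apply: measurable_indic; exact: mX0B.
apply: le_lt_trans moment_fin; apply: lime_le.
  by apply: is_cvg_nneseries => *; exact: measure_ge0.
apply: nearW => N.
rewrite (eq_bigr (fun j => \int[P]_x (\1_(X 0%N @^-1` B j) x)%:E)%E); last first.
  by move=> j _; rewrite iid; [rewrite integral_indic ?setIT | exact: mB].
rewrite big_mkord -(ge0_integral_sum P measurableT
  (f := fun (j : 'I_N) x => (\1_(X 0%N @^-1` B j) x)%:E)); last 2 first.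
- exact: m_indic.
- by move=> j x _; rewrite lee_fin.
rewrite expectation.unlock; apply: ge0_le_integral => //.
- by move=> x _; rewrite sume_ge0 // => j _; rewrite lee_fin.
- by apply: emeasurable_sum => j; exact: m_indic.
- by apply/measurable_EFinP; exact: measurableT_comp mh (mX 0%N).
- move=> x _; rewrite sumEFin lee_fin.
  by apply: (@sum_indic_le R T (fun j => X 0%N @^-1` B j)) => //; exact: powR_ge0.
Qed.

Lemma ae_eventually_pow_le {s : R} :
  ('E_P[(fun w => `|X 0%N w| `^ s)%R] < +oo)%E ->
  {ae P, forall w, exists m, forall j, (m <= j)%N -> `|X j w| `^ s <= j.+1%:R}.
Proof.
move=> moment_fin.
have mE j : measurable (X j @^-1` [set x | j.+1%:R < `|x| `^ s]).
  by have := mX j measurableT _ (measurable_pow_exceedance s j.+1%:R); rewrite setTI.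
have := @borel_cantelli_ae _ _ _ P _ mE (moment_exceedances_summable moment_fin).
apply: filterS.
by move=> w [m small]; exists m => j le_mj; rewrite leNgt; apply/negP/small.
Qed.

End IdenticallyDistributed.

(* If a_j <= j + 1 for all j >= m, then for every large n the whole initial
   segment a_0, ..., a_(n-1) is bounded by n: the finitely many terms below m
   are dominated by their maximum, the others by their index. *)
Lemma eventually_all_le_index {R : realType} {a : nat -> R} {m : nat} :
  (forall j, (m <= j)%N -> a j <= j.+1%:R) ->
  \forall n \near \oo, forall j, (j < n)%N -> a j <= n%:R.
Proof.
move=> a_tail; set M := \big[Num.max/0]_(j < m) a j.
exists (Num.truncn M).+1 => // n /= le_Mn j lt_jn; have [lt_jm|le_mj] := ltnP j m.
- apply: le_trans (le_bigmax 0 (fun i : 'I_m => a i) (Ordinal lt_jm)) _.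
  by rewrite (le_trans (ltW (truncnS_gt M))) // ler_nat.
- by rewrite (le_trans (a_tail _ le_mj)) // ler_nat.
Qed.

Lemma trunc_var_id d (T : measurableType d) (R : realType) (Y : T -> R)
    (n : nat) (s : R) (w : T) :
  0 < s -> `|Y w| `^ s <= n%:R -> trunc_var Y n s w = Y w.
Proof.
move=> s_gt0 pow_le; rewrite /trunc_var ifT //.
have -> : `|Y w| = (`|Y w| `^ s) `^ s^-1.
  by rewrite -powRrM mulfV ?gt_eqF // powRr1.
apply: ge0_ler_powR => //; first by rewrite invr_ge0 ltW.
  by rewrite nnegrE powR_ge0.
by rewrite nnegrE ler0n.
Qed.

Theorem lemma2p2 (d : measure_display) (T : measurableType d) (R : realType)
  (P : probability T R) (X : nat -> T -> R) (delta : R) :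
  (forall j, measurable_fun setT (X j)) ->
  mutually_independent P X ->
  identically_distributed P X ->
  non_degenerate P (X 0%N) ->
  ('E_P[X 0%N] = 0)%E ->
  ('E_P[(fun w => X 0%N w ^+ 2)%R] = 1)%E ->
  0 < delta ->
  ('E_P[(fun w => `|X 0%N w| `^ (2 + delta))%R] < +oo)%E ->
  {ae P, forall w, max_dev P X (2 + delta) n w @[n --> \oo] --> (0 : R)}.
Proof.
move=> mX _ iid _ _ _ delta_gt0 moment_fin.
have s_gt0 : 0 < 2 + delta by rewrite addr_gt0.
move: (ae_eventually_pow_le mX iid moment_fin); apply: filterS => w [m small].
apply: cvg_near_cst; move: (eventually_all_le_index small).
apply: filterS => n untruncated.
set c := fine ('E_P[trunc_var (X 0%N) n (2 + delta)])%E.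
have xi_tildeE j : (j < n)%N -> xi_tilde P X (2 + delta) n j w = X j w - c.
  move=> lt_jn; rewrite /xi_tilde (expectation_trunc_var_ident mX iid).
  by rewrite trunc_var_id // untruncated.
rewrite /max_dev big_nat_cond; apply: (big_ind (fun x => x = 0)) => //.
  by move=> x y -> ->; rewrite maxxx.
move=> k /andP[/andP[k_gt0 lt_kn] _].
by rewrite (dft_abs_shift (x := X^~ w) k_gt0 lt_kn xi_tildeE) subrr normr0.
Qed.
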